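(* The family of all finite connected graphs together with all confluent epimorphisms between them is a projective Fraïssé family.
   Context: A graph is a pair $A=(V(A),E(A))$ with $E(A)\subseteq V(A)^2$ reflexive and symmetric. An epimorphism $f\colon A\to B$ is a map $V(A)\to V(B)$ sending edges to edges and surjective on vertices and on edges. A set $S\subseteq V(G)$ is disconnected if $S=P\cup Q$ with $P,Q$ nonempty disjoint and no edge of $G$ between $P$ and $Q$; otherwise connected. The component of $S$ containing $a\in S$ is the largest connected subset of $S$ containing $a$. An epimorphism $f\colon G\to H$ is confluent if for every connected $Q\subseteq V(H)$ and every component $C$ of $f^{-1}(Q)$ we have $f(C)=Q$. A class $\mathcal F$ of finite graphs with a fixed class of epimorphisms is a projective Fraïssé family if: (1) it has countably many isomorphism types; (2) the fixed epimorphisms are closed under composition and include identities; (3) for $B,C\in\mathcal F$ there are $D\in\mathcal F$ and fixed epimorphisms $D\to B$, $D\to C$; (4) for fixed epimorphisms $f\colon B\to A$, $g\colon C\to A$ there are $D\in\mathcal F$ and fixed epimorphisms $f_0\colon D\to B$, $g_0\colon D\to C$ with $f\circ f_0=g\circ g_0$. *)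

From mathcomp Require Import all_boot.
Set Implicit Arguments. Unset Strict Implicit. Unset Printing Implicit Defensive.

Record graph := Graph {
  gV :> finType;
  gE : rel gV;
  gE_refl : reflexive gE;
  gE_sym : symmetric gE }.

Definition epimorphism (A B : graph) (f : A -> B) : Prop :=
  [/\ (forall x y : A, gE x y -> gE (f x) (f y)),
      (forall b : B, exists a : A, f a = b) &
      (forall b1 b2 : B, gE b1 b2 ->
         exists a1 a2 : A, [/\ gE a1 a2, f a1 = b1 & f a2 = b2])].

Definition disconnected (G : graph) (S : {set G}) : Prop :=
  exists P Q : {set G},
    [/\ S = P :|: Q, P != set0, Q != set0, [disjoint P & Q] &
        forall p q, p \in P -> q \in Q -> ~~ gE p q].

Definition connected (G : graph) (S : {set G}) : Prop := ~ disconnected S.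

Definition component_of (G : graph) (S : {set G}) (a : G) (C : {set G}) : Prop :=
  [/\ a \in S, a \in C, C \subset S, connected C &
      forall D : {set G}, a \in D -> D \subset S -> connected D -> D \subset C].

Definition is_component (G : graph) (S C : {set G}) : Prop :=
  exists a : G, component_of S a C.

Definition confluent (G H : graph) (f : G -> H) : Prop :=
  forall Q : {set H}, connected Q ->
  forall C : {set G}, is_component (f @^-1: Q) C -> f @: C = Q.

Definition confluent_epi (G H : graph) (f : G -> H) : Prop :=
  epimorphism f /\ confluent f.

Definition connected_graph (G : graph) : Prop :=
  (exists v : G, True) /\ connected [set: G].

Definition graph_iso (A B : graph) : Prop :=
  exists f : A -> B, bijective f /\ forall x y : A, gE (f x) (f y) = gE x y.

Definition projective_fraisse_family (F : graph -> Prop)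
  (M : forall A B : graph, (A -> B) -> Prop) : Prop :=
  [/\
      (exists s : nat -> graph, forall A, F A -> exists n, graph_iso A (s n)),
      (forall (A B C : graph) (f : A -> B) (g : B -> C),
         F A -> F B -> F C -> M A B f -> M B C g -> M A C (g \o f)) /\
      (forall A : graph, F A -> M A A id),
      (forall B C : graph, F B -> F C ->
         exists D : graph, F D /\
           exists (f : D -> B) (g : D -> C), M D B f /\ M D C g) &
      (forall (A B C : graph) (f : B -> A) (g : C -> A),
         F A -> F B -> F C -> M B A f -> M C A g ->
         exists D : graph, F D /\
           exists (f0 : D -> B) (g0 : D -> C),
             [/\ M D B f0, M D C g0 & f \o f0 =1 g \o g0])].

From mathcomp Require Import all_boot.
Set Implicit Arguments. Unset Strict Implicit. Unset Printing Implicit Defensive.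

(* Confluence can be tested pointwise: f is confluent iff for every connected
   Q and every a with f a in Q, the component of a in f^-1(Q) is mapped onto Q.
   In this form it is visibly stable under composition, and a confluent
   edge-preserving map onto a connected graph is an epimorphism.
   To amalgamate confluent epimorphisms f : B -> A and g : C -> A, take D to be
   a component of the pullback {(b, c) | f b = g c} with product edges.  Its
   projection to B is confluent: for an edge leaving the image of a component
   inside Q, confluence of g over the image of that edge gives a path in C,
   which is lifted step by step inside the pullback.  Joint projection is
   amalgamation over the one-point graph, and countability comes from coding
   a graph on 'I_n by its adjacency matrix. *)

Lemma connect_invariant (T : finType) (e : rel T) (P : T -> Prop) x y :
  P x -> (forall u v, P u -> e u v -> P v) -> connect e x y -> P y.
Proof.
move=> Px step /connectP [p pth ->]; elim: p x Px pth => [|z p IH] x Px //=.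
by case/andP=> exz pth; apply: IH (step _ _ Px exz) pth.
Qed.

Lemma connect_homo (T T' : finType) (e : rel T) (e' : rel T') (h : T -> T') :
  {homo h : x y / e x y >-> e' x y} ->
  {homo h : x y / connect e x y >-> connect e' x y}.
Proof.
move=> he x y; apply: (connect_invariant (P := connect e' (h x) \o h)) => //= u v cu euv.
exact: connect_trans cu (connect1 (he _ _ euv)).
Qed.

Lemma connect_exit (T : finType) (e : rel T) (P : pred T) x y :
  connect e x y -> P x -> ~~ P y -> exists u v, [/\ e u v, P u & ~~ P v].
Proof.
move=> cxy Px /negP nPy.
have [/nPy //|//] : P y \/ exists u v, [/\ e u v, P u & ~~ P v].
apply: (connect_invariant (P := fun z => P z \/ _)) cxy => [|u v [Pu euv|]].
- by left.
- by case Pv: (P v); [left | right; exists u, v; rewrite Pv].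
- by right.
Qed.

Section Components.
Variable G : graph.
Implicit Types (S T D : {set G}) (a u v x y : G).

Definition gE_in S : rel G := fun x y => [&& x \in S, y \in S & gE x y].

Definition component S a : {set G} := [set y | connect (gE_in S) a y].

Lemma gE_in_sym S : symmetric (gE_in S).
Proof. by move=> x y; rewrite /gE_in gE_sym andbCA. Qed.

Lemma connectedP S : connected S <-> {in S &, forall x y, connect (gE_in S) x y}.
Proof.
split=> [cS x y xS yS | cS [P [Q [defS /set0Pn [p pP] /set0Pn [q qQ] dPQ noPQ]]]].
  apply/idPn => nxy; apply: cS.
  pose P := [set z in S | connect (gE_in S) x z].
  exists P, (S :\: P); split.
  - by apply/setP => z; rewrite !inE; case: (z \in S); case: connect.
  - by apply/set0Pn; exists x; rewrite inE xS connect0.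
  - by apply/set0Pn; exists y; rewrite !inE yS (negbTE nxy).
  - rewrite -setI_eq0; apply/eqP/setP => z; rewrite !inE.
    by case: connect; case: (z \in S).
  - move=> u v; rewrite !inE => /andP [uS cxu] /andP [ncxv vS]; apply: contra ncxv => euv.
    by rewrite vS (connect_trans cxu) // connect1 // /gE_in uS vS.
have [pS qS] : p \in S /\ q \in S by rewrite defS !inE pP qQ orbT.
suff qP : q \in P by rewrite (disjointFl dPQ qQ) in qP.
apply: (connect_invariant (P := fun z => z \in P)) (cS p q pS qS) => // x z xP /and3P [_].
by rewrite defS inE => /orP [//| zQ]; rewrite (negbTE (noPQ x z xP zQ)).
Qed.

Lemma connect_gE_in_subset S T x y :
  S \subset T -> connect (gE_in S) x y -> connect (gE_in T) x y.
Proof.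
move=> ST; apply: connect_sub => u v /and3P [uS vS euv].
by rewrite connect1 // /gE_in !(subsetP ST) ?euv.
Qed.

Lemma mem_component S a : a \in component S a.
Proof. by rewrite inE connect0. Qed.

Lemma component_sub S a : a \in S -> component S a \subset S.
Proof.
move=> aS; apply/subsetP => y; rewrite inE.
by apply: (connect_invariant (P := fun z => z \in S)) aS _ => u v _ /and3P [].
Qed.

Lemma component_closed S a x y : a \in S ->
  x \in component S a -> y \in S -> gE x y -> y \in component S a.
Proof.
move=> aS xK yS exy; move: (xK); rewrite !inE => /connect_trans; apply.
by rewrite connect1 // /gE_in (subsetP (component_sub aS)) ?yS.
Qed.

Lemma component_connected S a : connected (component S a).
Proof.
set K := component S a.
suff cK y : connect (gE_in S) a y -> y \in K /\ connect (gE_in K) a y.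
  apply/connectedP => x y; rewrite !inE => /cK [_ cx] /cK [_ cy].
  by apply: connect_trans cy; rewrite (sym_connect_sym (gE_in_sym _)).
apply: (connect_invariant (P := fun z => z \in K /\ _)) => [|u v [uK cu] Suv].
  by rewrite mem_component.
have vK : v \in K by rewrite inE (connect_trans _ (connect1 Suv)) // -inE.
by rewrite vK (connect_trans cu) // connect1 // /gE_in uK vK; case/and3P: Suv.
Qed.

Lemma component_max S a D :
  a \in D -> D \subset S -> connected D -> D \subset component S a.
Proof.
move=> aD DS /connectedP cD; apply/subsetP => d dD; rewrite inE.
exact: connect_gE_in_subset DS (cD a d aD dD).
Qed.

Lemma component_ofE S a C : component_of S a C <-> a \in S /\ C = component S a.
Proof.
split=> [[aS aC CS cC maxC] | [aS ->]].
  split=> //; apply/eqP; rewrite eqEsubset component_max //=.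
  by apply: maxC; [exact: mem_component | exact: component_sub |
    exact: component_connected].
split=> //; [exact: mem_component | exact: component_sub |
  exact: component_connected | exact: component_max].
Qed.

Lemma component_id S a : connected S -> a \in S -> component S a = S.
Proof.
move=> /connectedP cS aS; apply/eqP; rewrite eqEsubset component_sub //=.
by apply/subsetP => y yS; rewrite inE cS.
Qed.

Lemma gE_set2 u v x y : gE u v -> x \in [set u; v] -> y \in [set u; v] -> gE x y.
Proof.
by move=> euv; rewrite !inE => /orP [] /eqP -> /orP [] /eqP ->;
  rewrite ?gE_refl // gE_sym.
Qed.

Lemma connected_set2 u v : gE u v -> connected [set u; v].
Proof.
move=> euv; apply/connectedP => x y xuv yuv.
by rewrite connect1 // /gE_in xuv yuv (gE_set2 euv).
Qed.

End Components.

Lemma connect_gE_in_homo (G H : graph) (f : G -> H) (S : {set G}) (T : {set H}) :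
  {homo f : x y / gE x y} -> {in S, forall x, f x \in T} ->
  {homo f : x y / connect (gE_in S) x y >-> connect (gE_in T) x y}.
Proof.
move=> fE fST; apply: connect_homo => x y /and3P [xS yS exy].
by rewrite /gE_in !fST ?fE.
Qed.

Definition pconfluent (G H : graph) (f : G -> H) : Prop :=
  forall Q : {set H}, connected Q ->
  forall a : G, f a \in Q -> f @: component (f @^-1: Q) a = Q.

Lemma confluentE (G H : graph) (f : G -> H) : confluent f <-> pconfluent f.
Proof.
split=> [cf Q cQ a aQ | cf Q cQ C [a /component_ofE [aQ ->]]].
  by apply: cf cQ _ _; exists a; apply/component_ofE; rewrite inE.
by rewrite inE in aQ; apply: cf.
Qed.

Lemma pconfluent_id (G : graph) : pconfluent (@id G).
Proof.
move=> Q cQ a aQ; have -> : id @^-1: Q = Q by apply/setP => x; rewrite inE.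
by rewrite component_id // imset_id.
Qed.

Lemma pconfluent_comp (A B C : graph) (f : A -> B) (g : B -> C) :
  {homo f : x y / gE x y} -> pconfluent f -> pconfluent g -> pconfluent (g \o f).
Proof.
move=> fE cf cg Q cQ a aQ.
have gfaQ : f a \in g @^-1: Q by rewrite inE.
set L := component (g @^-1: Q) (f a).
have LQ : L \subset g @^-1: Q := component_sub gfaQ.
have aL : a \in f @^-1: L by rewrite inE mem_component.
suff -> : component ((g \o f) @^-1: Q) a = component (f @^-1: L) a.
  by rewrite (imset_comp g f) cf ?mem_component ?cg //; apply: component_connected.
have aK : a \in (g \o f) @^-1: Q by rewrite inE.
apply/eqP; rewrite eqEsubset !component_max ?mem_component //;
  try exact: component_connected.
  apply: subset_trans (component_sub aL) _; apply/subsetP => x.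
  by rewrite [x \in _]inE => /(subsetP LQ); rewrite !inE.
apply/subsetP => x; rewrite !inE.
by apply: connect_gE_in_homo => // y; rewrite !inE.
Qed.

Lemma pconfluent_epimorphism (G H : graph) (f : G -> H) (x0 : G) :
  {homo f : x y / gE x y} -> pconfluent f -> connected [set: H] -> epimorphism f.
Proof.
move=> fE cf cH.
have f_surj b : exists a, f a = b.
  have /setP/(_ b) := cf _ cH x0 (in_setT _).
  by rewrite in_setT => /imsetP [a _ ->]; exists a.
split=> // b1 b2 e12; have [x fx] := f_surj b1.
have xQ : f x \in [set b1; b2] by rewrite fx set21.
have /setP/(_ b2) := cf _ (connected_set2 e12) x xQ.
rewrite set22 => /imsetP [y yK fy]; rewrite inE in yK.
have [<- | b12] := eqVneq b1 b2; first by exists x, x; rewrite gE_refl.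
have fyb1 : f y != b1 by rewrite -fy eq_sym.
have [u [v [/and3P [_ vQ euv] /eqP fu fv]]] :=
  connect_exit (P := fun z => f z == b1) yK (introT eqP fx) fyb1.
move: vQ; rewrite !inE (negbTE fv) => /eqP fv2.
by exists u, v.
Qed.

Lemma epimorphism_comp (A B C : graph) (f : A -> B) (g : B -> C) :
  epimorphism f -> epimorphism g -> epimorphism (g \o f).
Proof.
move=> [fE f_surj f_esurj] [gE g_surj g_esurj]; split=> [x y /fE /gE // | c | c1 c2].
  by have [b <-] := g_surj c; have [a <-] := f_surj b; exists a.
move=> /g_esurj [b1 [b2 [/f_esurj [a1 [a2 [e12 <- <-]]] <- <-]]].
by exists a1, a2.
Qed.

Lemma confluent_epi_comp (A B C : graph) (f : A -> B) (g : B -> C) :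
  confluent_epi f -> confluent_epi g -> confluent_epi (g \o f).
Proof.
move=> [ef /confluentE cf] [eg /confluentE cg]; split; first exact: epimorphism_comp.
by apply/confluentE; apply: pconfluent_comp => //; case: ef.
Qed.

Lemma confluent_epi_id (G : graph) : confluent_epi (@id G).
Proof.
split; last by apply/confluentE; apply: pconfluent_id.
by split=> // [b | b1 b2 e]; [exists b | exists b1, b2].
Qed.

Section PullbackProjection.
Variables (A B C D : graph) (f : B -> A) (g : C -> A) (f' : D -> B) (g' : D -> C).
Hypotheses (fE : {homo f : x y / gE x y}) (g_conf : pconfluent g).
Hypothesis comm : forall x, f (f' x) = g (g' x).
Hypothesis lift : forall x b c, f b = g c -> gE (f' x) b -> gE (g' x) c ->
  exists y, [/\ f' y = b, g' y = c & gE x y].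

Section EdgeLifting.
Variables (Q : {set B}) (a : D).
Hypothesis aQ : f' a \in Q.
Let K := component (f' @^-1: Q) a.

Let aK : a \in f' @^-1: Q. Proof. by rewrite inE. Qed.

Lemma lift_in_component y b c : y \in K -> b \in Q -> f b = g c ->
  gE (f' y) b -> gE (g' y) c -> exists2 y', y' \in K & f' y' = b /\ g' y' = c.
Proof.
move=> yK bQ fbc eb ec; have [y' [fy' gy' eyy']] := lift fbc eb ec.
by exists y' => //; apply: component_closed aK yK _ eyy'; rewrite inE fy'.
Qed.

Lemma image_component_edge_closed k q :
  k \in K -> q \in Q -> gE (f' k) q -> q \in f' @: K.
Proof.
move=> kK qQ ekq; set P := [set f' k; q].
have PQ : P \subset Q.
  move/(subsetP (component_sub aK)): kK; rewrite inE => kQ.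
  by rewrite subUset !sub1set kQ qQ.
have [c cK gc] : exists2 c, connect (gE_in (g @^-1: [set f (f' k); f q])) (g' k) c
    & g c = f q.
  have gk : g (g' k) \in [set f (f' k); f q] by rewrite -comm set21.
  have /setP/(_ (f q)) := g_conf (connected_set2 (fE ekq)) gk.
  by rewrite set22 => /imsetP [c cK gc]; exists c; rewrite // -inE.
suff /(_ q) : forall b, b \in P -> f b = g c ->
    exists2 y, y \in K & f' y = b /\ g' y = c.
  by case=> [||y yK [<- _]]; rewrite ?set22 ?gc ?imset_f.
have ePP b b' : b \in P -> b' \in P -> gE b b' by apply: gE_set2.
(* Along the path from g' k to c, every b in P over d lifts into K above (b, d). *)
apply: (connect_invariant (P := fun d => forall b, _ -> _ -> _)) cK.
  move=> b bP fb; apply: lift_in_component kK _ fb _ (gE_refl _).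
    exact: subsetP PQ _ bP.
  by apply: ePP; rewrite ?set21.
move=> x z IH /and3P [xQ' _ exz] b' bP' fb'.
have [b bP fb] : exists2 b, b \in P & f b = g x.
  move: xQ'; rewrite !inE => /orP [] /eqP ->.
    by exists (f' k); rewrite ?set21.
  by exists q; rewrite ?set22.
have [y yK [fy gy]] := IH b bP fb.
apply: lift_in_component yK _ fb' _ _; first exact: subsetP PQ _ bP'.
  by rewrite fy ePP.
by rewrite gy.
Qed.

End EdgeLifting.

Lemma pconfluent_pullback_projection : pconfluent f'.
Proof.
move=> Q cQ a aQ; have aK : a \in f' @^-1: Q by rewrite inE.
set K := component _ a; apply/eqP; rewrite eqEsubset; apply/andP; split.
  apply/subsetP => _ /imsetP [k kK ->].
  by move/(subsetP (component_sub aK)): kK; rewrite inE.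
apply/subsetP => q qQ; have := (connectedP Q).1 cQ (f' a) q aQ qQ.
apply: (connect_invariant (P := fun z => z \in f' @: K)).
  by rewrite imset_f ?mem_component.
move=> _ z /imsetP [k kK ->] /and3P [_ zQ ekz].
exact: (image_component_edge_closed aQ kK zQ ekz).
Qed.

End PullbackProjection.

Section Amalgam.
Variables (A B C : graph) (f : B -> A) (g : C -> A) (b0 : B) (c0 : C).

Definition pullback_rel : rel (B * C) := fun x y =>
  [&& f x.1 == g x.2, f y.1 == g y.2, gE x.1 y.1 & gE x.2 y.2].

Definition amalgam_vertex := {p : B * C | connect pullback_rel (b0, c0) p}.

Definition amalgam_rel : rel amalgam_vertex := fun x y =>
  gE (val x).1 (val y).1 && gE (val x).2 (val y).2.

Lemma amalgam_rel_refl : reflexive amalgam_rel.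
Proof. by move=> x; rewrite /amalgam_rel !gE_refl. Qed.

Lemma amalgam_rel_sym : symmetric amalgam_rel.
Proof. by move=> x y; rewrite /amalgam_rel gE_sym (gE_sym (val x).2). Qed.

Definition amalgam : graph := Graph amalgam_rel_refl amalgam_rel_sym.

Definition amalgam_base : amalgam := exist _ (b0, c0) (connect0 _ _).

Definition amalgam_fst (x : amalgam) : B := (val x).1.
Definition amalgam_snd (x : amalgam) : C := (val x).2.

Lemma amalgam_fst_homo : {homo amalgam_fst : x y / gE x y}.
Proof. by move=> x y /andP []. Qed.

Lemma amalgam_snd_homo : {homo amalgam_snd : x y / gE x y}.
Proof. by move=> x y /andP []. Qed.

Lemma amalgam_step (x : amalgam) p :
  pullback_rel (val x) p -> exists y : amalgam, val y = p /\ gE x y.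
Proof.
move=> xp; exists (exist _ p (connect_trans (valP x) (connect1 xp))).
by case/and4P: (xp) => _ _ e1 e2; rewrite /= /amalgam_rel e1 e2.
Qed.

Lemma amalgam_connected : connected_graph amalgam.
Proof.
split; first by exists amalgam_base.
suff base_conn x : connect (gE_in [set: amalgam]) amalgam_base x.
  apply/connectedP => x y _ _; apply: connect_trans (base_conn y).
  by rewrite (sym_connect_sym (gE_in_sym _)).
have [y [/val_inj <- //]] : exists y : amalgam, val y = val x /\
    connect (gE_in [set: amalgam]) amalgam_base y.
apply: (connect_invariant (P := fun p => exists y, val y = p /\ _)) (valP x).
  by exists amalgam_base.
move=> _ p [y [<- cy]] /amalgam_step [z [zp eyz]]; exists z; split=> //.
by apply: connect_trans cy (connect1 _); rewrite /gE_in !in_setT.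
Qed.

Hypothesis fg0 : f b0 = g c0.

Lemma amalgam_comm x : f (amalgam_fst x) = g (amalgam_snd x).
Proof.
apply/eqP; apply: (connect_invariant (P := fun p => f p.1 == g p.2)) (valP x).
  exact/eqP.
by move=> u v _ /and4P [].
Qed.

Lemma amalgam_lift x b c : f b = g c ->
  gE (amalgam_fst x) b -> gE (amalgam_snd x) c ->
  exists y, [/\ amalgam_fst y = b, amalgam_snd y = c & gE x y].
Proof.
move=> fbc eb ec; have [|y [yp exy]] := @amalgam_step x (b, c).
  by rewrite /pullback_rel amalgam_comm fbc !eqxx eb ec.
by exists y; rewrite /amalgam_fst /amalgam_snd yp.
Qed.

End Amalgam.

Lemma confluent_amalgamation (A B C : graph) (f : B -> A) (g : C -> A) :
  connected_graph B -> connected_graph C -> confluent_epi f -> confluent_epi g ->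
  exists D : graph, connected_graph D /\
    exists (f' : D -> B) (g' : D -> C),
      [/\ confluent_epi f', confluent_epi g' & f \o f' =1 g \o g'].
Proof.
move=> [[b0 _] cB] [_ cC] [[f_homo _ _] /confluentE cf].
move=> [[g_homo g_surj _] /confluentE cg].
have [c0 /esym fg0] := g_surj (f b0).
pose D := amalgam f g b0 c0.
pose f' := @amalgam_fst A B C f g b0 c0; pose g' := @amalgam_snd A B C f g b0 c0.
have comm : forall x, f (f' x) = g (g' x) := amalgam_comm fg0.
have cf' : pconfluent f'.
  exact: pconfluent_pullback_projection f_homo cg comm (amalgam_lift fg0).
have cg' : pconfluent g'.
  apply: (pconfluent_pullback_projection g_homo cf (fun x => esym (comm x))).
  move=> x c b /esym fbc ec eb.
  by have [y []] := amalgam_lift fg0 fbc eb ec; exists y.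
exists D; split; first exact: amalgam_connected.
exists f', g'; split=> //; split; try exact/confluentE.
- by apply: (pconfluent_epimorphism (amalgam_base f g b0 c0)) cf' cB;
    apply: amalgam_fst_homo.
- by apply: (pconfluent_epimorphism (amalgam_base f g b0 c0)) cg' cC;
    apply: amalgam_snd_homo.
Qed.

Definition point_graph : graph :=
  @Graph unit (fun _ _ => true) (fun _ => erefl) (fun _ _ => erefl).

Lemma point_graph_connected : connected_graph point_graph.
Proof.
split; first by exists tt.
by apply/connectedP => [[] []] _ _; apply: connect0.
Qed.

Lemma confluent_epi_to_point (G : graph) :
  connected_graph G -> confluent_epi (fun _ : G => tt : point_graph).
Proof.
move=> [[x0 _] cG].
have cf : pconfluent (fun _ : G => tt : point_graph).
  move=> Q _ a aQ; have QT : Q = setT by apply/setP => [[]]; rewrite in_setT.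
  rewrite QT preimsetT component_id ?in_setT //.
  by apply/setP => [[]]; rewrite in_setT; apply/imsetP; exists a; rewrite ?in_setT.
split; last exact/confluentE.
by apply: (pconfluent_epimorphism x0) cf point_graph_connected.2.
Qed.

Definition adjacency_rel n (r : {ffun 'I_n * 'I_n -> bool}) : rel 'I_n :=
  fun i j => [|| i == j, r (i, j) | r (j, i)].

Lemma adjacency_rel_refl n r : reflexive (@adjacency_rel n r).
Proof. by move=> i; rewrite /adjacency_rel eqxx. Qed.

Lemma adjacency_rel_sym n r : symmetric (@adjacency_rel n r).
Proof. by move=> i j; rewrite /adjacency_rel [j == i]eq_sym [r (j, i) || _]orbC. Qed.

Definition adjacency_graph n r : graph :=
  Graph (@adjacency_rel_refl n r) (@adjacency_rel_sym n r).

Definition graph_of_code (k : nat) : graph :=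
  match @unpickle (nat * nat)%type k with
  | Some (n, m) =>
      adjacency_graph (odflt [ffun _ => false] (@unpickle {ffun 'I_n * 'I_n -> bool} m))
  | None => adjacency_graph (n := 0) [ffun _ => false]
  end.

Lemma graph_of_code_iso (G : graph) : exists k, graph_iso G (graph_of_code k).
Proof.
pose r := [ffun p : 'I_#|G| * 'I_#|G| => gE (enum_val p.1 : G) (enum_val p.2)].
exists (pickle (#|G|, pickle r)); rewrite /graph_of_code !pickleK /=.
exists enum_rank; split; first exact: Bijective enum_rankK enum_valK.
move=> x y; rewrite /= /adjacency_rel !ffunE /= !enum_rankK (gE_sym y x) orbb.
have [<-|nxy] := eqVneq x y; first by rewrite eqxx gE_refl.
by rewrite (inj_eq enum_rank_inj) (negbTE nxy).
Qed.

Theorem corollary4p13 :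
  projective_fraisse_family connected_graph confluent_epi.
Proof.
split.
- by exists graph_of_code => G _; apply: graph_of_code_iso.
- split=> [A B C f g _ _ _ | G _]; first exact: confluent_epi_comp.
  exact: confluent_epi_id.
- move=> B C cB cC.
  have [D [cD [f' [g' [cf' cg' _]]]]] := confluent_amalgamation cB cC
    (confluent_epi_to_point cB) (confluent_epi_to_point cC).
  by exists D; split=> //; exists f', g'.
- by move=> A B C f g _ cB cC; apply: confluent_amalgamation.
Qed.
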